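(* Let $m=m(n)=O(n\log\log n)$ and let $G\sim G(n,m)$. Then, for all sufficiently large $n$, $$\Pr\big(\delta(G)\geq 2\big)\leq n\,e^{-2m e^{-2m/n}}.$$
   Context: $G(n,m)$ is the uniform random graph model: $G$ is chosen uniformly at random among all graphs on vertex set $[n]$ with exactly $m$ edges. $\delta(G)$ denotes the minimum degree of $G$. *)

From mathcomp Require Import all_boot.
From Stdlib Require Import Reals.
Set Implicit Arguments. Unset Strict Implicit. Unset Printing Implicit Defensive.

Definition is_graph (n : nat) (E : {set {set 'I_n}}) : bool :=
  [forall e in E, #|e| == 2].

Definition Gnm (n m : nat) : {set {set {set 'I_n}}} :=
  [set E | is_graph E && (#|E| == m)].

Definition deg (n : nat) (E : {set {set 'I_n}}) (v : 'I_n) : nat :=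
  #|[set e in E | v \in e]|.

Definition mindeg_ge2 (n : nat) (E : {set {set 'I_n}}) : bool :=
  [forall v, 2 <= deg E v].

Definition prob_mindeg_ge2 (n m : nat) : R :=
  (INR #|[set E in Gnm n m | mindeg_ge2 E]| / INR #|Gnm n m|)%R.

(* List the m edges of a graph with minimum degree at least 2 in some order
   (m! ways) and orient each of them (2^m ways): the result is a map from the
   2m half-edges onto the n vertices hitting every vertex at least twice.
   Removing the fibre of the last vertex and inducting on n shows that, for
   every lam > 0, there are at most (2m)! h(lam)^n / lam^(2m) such maps, where
   h(lam) = e^lam - 1 - lam is the tail of the exponential series.  Since
   |G(n,m)| m! 2^m >= (n(n-1) - 2m)^m, the probability is at most
   (2m)! h(lam)^n / (lam^(2m) (n(n-1) - 2m)^m).  For lam = 2m/n the bounds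
   k! <= e k^(k+1) e^(-k), h(lam) <= e^(lam - (1+lam)e^(-lam)) and
   1 - x >= e^(-2x) reduce this to n e^(-2m e^(-lam)), provided 3 lam <= ln n;
   that condition holds for large n as soon as m = O(n log log n). *)

From Stdlib Require Import Reals Lra Factorial.
From mathcomp Require Import all_boot all_order all_algebra.
From mathcomp Require Import Rstruct.
Set Implicit Arguments. Unset Strict Implicit. Unset Printing Implicit Defensive.

(** * Maps onto ['I_n] with all fibres of size at least two *)

Section PartialMaps.
Variable D : finType.

(* Partial maps, as option-valued functions, let the induction on [n] strip
   the fibre of the top point without changing the domain type. *)
Definition pfun2 n (X : {set D}) : {set {ffun D -> option 'I_n}} :=
  [set f : {ffun D -> option 'I_n} | [forall d, (f d != None) == (d \in X)] &&
           [forall v, 1 < #|[set d | f d == Some v]|]].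

Definition top_fiber n (f : {ffun D -> option 'I_n.+1}) : {set D} :=
  [set d | f d == Some ord_max].

Definition drop_top n (f : {ffun D -> option 'I_n.+1}) : {ffun D -> option 'I_n} :=
  [ffun d => obind (unlift ord_max) (f d)].

Lemma drop_top_inj n (f g : {ffun D -> option 'I_n.+1}) :
  top_fiber f = top_fiber g -> drop_top f = drop_top g -> f = g.
Proof.
move=> /setP tfg /ffunP dfg; apply/ffunP => d.
move: (tfg d) (dfg d); rewrite !inE !ffunE.
case: (f d) (g d) => [u|] [v|] //=;
  do ?[case: (unliftP ord_max u) => [u' ->|->]];
  do ?[case: (unliftP ord_max v) => [v' ->|->]];
  rewrite /= ?liftK ?unlift_none ?eqxx //.
by move=> _ [->].
Qed.

Lemma top_fiber_sub n X (f : {ffun D -> option 'I_n.+1}) :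
  f \in pfun2 n.+1 X -> (top_fiber f \subset X) && (1 < #|top_fiber f|).
Proof.
rewrite inE => /andP[/forallP dom /forallP fib]; rewrite fib andbT.
by apply/subsetP => d; rewrite inE => /eqP fd; move: (dom d); rewrite fd => /eqP <-.
Qed.

Lemma drop_top_pfun2 n X (f : {ffun D -> option 'I_n.+1}) :
  f \in pfun2 n.+1 X -> drop_top f \in pfun2 n (X :\: top_fiber f).
Proof.
rewrite !inE => /andP[/forallP dom /forallP fib]; apply/andP; split.
  apply/forallP => d; rewrite ffunE !inE; move/eqP: (dom d) <-.
  case: (f d) => [u|] //=; case: (unliftP ord_max u) => [u' ->|->] /=.
    by rewrite (inj_eq Some_inj) [lift _ _ == _]eq_sym neq_lift.
  by rewrite eqxx.
apply/forallP => v; apply: leq_trans (fib (lift ord_max v)) _.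
by apply/subset_leq_card/subsetP => d; rewrite !inE ffunE => /eqP ->; rewrite /= liftK.
Qed.

Lemma card_pfun2S n X :
  #|pfun2 n.+1 X| <= \sum_(Y : {set D} | (Y \subset X) && (1 < #|Y|)) #|pfun2 n (X :\: Y)|.
Proof.
rewrite -sum1_card.
rewrite (partition_big (@top_fiber n) (fun Y => (Y \subset X) && (1 < #|Y|))) /=;
  last exact: top_fiber_sub.
apply: leq_sum => Y _; rewrite sum1dep_card.
set A := [set _ | _].
rewrite -(@card_in_imset _ _ (@drop_top n) A); last first.
  by move=> f g; rewrite !inE => /andP[_ /eqP <-] /andP[_ /eqP tg]; apply: drop_top_inj.
apply/subset_leq_card/subsetP => g /imsetP[f]; rewrite inE => /andP[fX /eqP <-] ->.
exact: drop_top_pfun2.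
Qed.

End PartialMaps.

Section ExpTailBound.
Import Order.TTheory GRing.Theory Num.Theory.
Local Open Scope ring_scope.

Lemma sum_subsets_card (T : finType) (V : nmodType) (X : {set T}) (P : pred nat)
    (F : nat -> V) :
  \sum_(Y : {set T} | (Y \subset X) && P #|Y|) F #|Y| =
  \sum_(j < #|X|.+1 | P j) F j *+ 'C(#|X|, j).
Proof.
have cardY (Y : {set T}) : Y \subset X -> (#|Y| < #|X|.+1)%N.
  by rewrite ltnS; apply: subset_leq_card.
rewrite (partition_big (fun Y : {set T} => inord #|Y| : 'I_#|X|.+1) P) /=; last first.
  by move=> Y /andP[/cardY sYX PY]; rewrite inordK.
apply: eq_bigr => j Pj; rewrite -cards_draws -sumr_const.
apply: eq_big => [Y|Y /andP[/andP[sYX _] /eqP <-]]; last by rewrite inordK ?cardY.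
rewrite inE; case sYX: (Y \subset X) => //=.
apply/andP/eqP => [[_ /eqP <-]|eYj]; first by rewrite inordK ?cardY.
by rewrite eYj inord_val Pj.
Qed.

Definition exp_tail2 (F : fieldType) (N : nat) (x : F) : F :=
  \sum_(2 <= j < N.+1) x ^+ j / j`!%:R.

Lemma binomial_fact_weight (F : numFieldType) [x j : nat] (c y : F) : (j <= x)%N ->
  (x - j)`!%:R * c * y *+ 'C(x, j) = x`!%:R * c * (y / j`!%:R).
Proof.
move=> jx; rewrite -mulr_natr -(bin_fact jx) mulnCA mulnC !natrM mulrA.
rewrite 2!(mulrAC _ j`!%:R) mulfK ?pnatr_eq0 -?lt0n ?fact_gt0 //.
by rewrite mulrC !mulrA.
Qed.

Variables (D : finType) (K : realFieldType) (lam : K).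
Hypothesis lam_ge0 : 0 <= lam.

Lemma exp_tail2_ge0 N : 0 <= exp_tail2 N lam.
Proof. by apply: sumr_ge0 => j _; rewrite divr_ge0 ?exprn_ge0. Qed.

Lemma exp_tail2_mono N M : (N <= M)%N -> exp_tail2 N lam <= exp_tail2 M lam.
Proof.
move=> NM; rewrite /exp_tail2 (@big_nat_widen _ _ _ 2 N.+1 M.+1) // big_mkcondr /=.
by apply: ler_sum_nat => j _; case: ifP => // _; rewrite divr_ge0 ?exprn_ge0.
Qed.

Lemma card_pfun2_le n N (X : {set D}) : (#|X| <= N)%N ->
  #|pfun2 n X|%:R * lam ^+ #|X| <= #|X|`!%:R * exp_tail2 N lam ^+ n.
Proof.
elim: n X => [|n IH] X XN.
  have [->|[d dX]] := set_0Vmem X.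
    rewrite cards0 fact0 !expr0 !mulr1 (ler_nat _ _ 1).
    by rewrite (leq_trans (max_card _)) // card_ffun card_option card_ord exp1n.
  suff -> : pfun2 0 X = set0 by rewrite cards0 mul0r mulr_ge0 ?ler0n ?expr0.
  apply/setP => f; rewrite !inE; apply/negbTE/nandP; left.
  by apply/forallPn; exists d; rewrite dX; case: (f d) => [[]|].
apply: le_trans (_ : \sum_(Y : {set D} | (Y \subset X) && (1 < #|Y|)%N)
   (#|X| - #|Y|)`!%:R * exp_tail2 N lam ^+ n * lam ^+ #|Y| <= _).
  apply: le_trans (_ : \sum_(Y : {set D} | (Y \subset X) && (1 < #|Y|)%N)
     #|pfun2 n (X :\: Y)|%:R * lam ^+ #|X| <= _).
    by rewrite -mulr_suml -natr_sum ler_wpM2r ?exprn_ge0 ?ler_nat ?card_pfun2S.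
  apply: ler_sum => Y /andP[sYX _].
  rewrite -(subnK (subset_leq_card sYX)) exprD mulrA -cardsDS // addnK.
  apply: ler_wpM2r; first exact: exprn_ge0.
  by apply: IH; rewrite cardsDS // (leq_trans (leq_subr _ _) XN).
rewrite (sum_subsets_card X (fun j => 1 < j)%N
  (fun j => (#|X| - j)`!%:R * exp_tail2 N lam ^+ n * lam ^+ j)).
rewrite (eq_bigr (fun j : 'I_#|X|.+1 =>
  #|X|`!%:R * exp_tail2 N lam ^+ n * (lam ^+ j / j`!%:R))); last first.
  by move=> j _; rewrite binomial_fact_weight // -ltnS.
rewrite -mulr_sumr exprSr mulrA ler_wpM2l ?mulr_ge0 ?exprn_ge0 ?exp_tail2_ge0 //.
by apply: le_trans (exp_tail2_mono XN); rewrite /exp_tail2 big_geq_mkord.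
Qed.

End ExpTailBound.

(** * Graphs as ordered lists of oriented edges *)

Lemma ffact_ge_pow N m : (N - m) ^ m <= N ^_ m.
Proof.
suff le_j j : j <= m -> (N - m) ^ j <= N ^_ j by exact: le_j.
elim: j => [|j IH] jm; first by rewrite ffactn0.
by rewrite expnSr ffactnSr leq_mul ?IH ?leq_sub2l ?(ltnW jm).
Qed.

Lemma enum_card2 (T : finType) (e : {set T}) :
  #|e| = 2 -> exists x y, x != y /\ enum e = [:: x; y].
Proof.
rewrite cardE; have := enum_uniq (mem e).
by case: (enum e) => [|x [|y [|]]] //=; rewrite inE andbT => xy _; exists x, y.
Qed.

Lemma onth_card2_inj (T : finType) (e : {set T}) :
  #|e| = 2 -> injective (fun c : bool => onth (enum e) c).
Proof.
move=> /enum_card2[x [y [xy ->]]] [] [] //= [yx]; by rewrite yx eqxx in xy.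
Qed.

Lemma mem_card2_onth (T : finType) (e : {set T}) (b : bool) :
  #|e| = 2 -> forall v, (v \in e) = [exists c : bool, onth (enum e) (b (+) c) == Some v].
Proof.
move=> /enum_card2[x [y [_ enum_e]]] v; rewrite -mem_enum enum_e !inE.
apply/orP/existsP => [[] /eqP ->|[c]]; first by exists b; rewrite addbb.
  by exists (~~ b); rewrite addbN addbb.
by case: (b (+) c) => /= /eqP[<-]; [right|left].
Qed.

Section EdgeSequences.
Variables n m : nat.

Definition edge_set (s : {ffun 'I_m -> {set 'I_n}}) : {set {set 'I_n}} :=
  [set s i | i : 'I_m].

Definition mindeg2_seqs : {set {ffun 'I_m -> {set 'I_n}}} :=
  [set s : {ffun 'I_m -> {set 'I_n}} |
    [&& injectiveb s, [forall i, #|s i| == 2] & mindeg_ge2 (edge_set s)]].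

Lemma mindeg2_seqs_fiber (E : {set {set 'I_n}}) s :
    E \in Gnm n m -> mindeg_ge2 E ->
  (s \in mindeg2_seqs) && (edge_set s == E) = (s \in ffun_on E) && injectiveb s.
Proof.
rewrite inE => /andP[/forallP E2 /eqP cardE] E_ge2.
apply/andP/andP => [[]|[/ffun_onP sE inj_s]].
  by rewrite inE => /and3P[inj_s _ _] /eqP <-; split=> //; apply/ffun_onP => i; apply: imset_f.
have sE_eq : edge_set s = E.
  apply/eqP; rewrite eqEcard card_imset ?card_ord ?cardE //; last exact/injectiveP.
  by rewrite leqnn andbT; apply/subsetP => e /imsetP[i _ ->]; apply: sE.
rewrite sE_eq eqxx; split=> //; rewrite inE inj_s sE_eq E_ge2 andbT /=.
by apply/forallP => i; apply: (implyP (E2 (s i))); apply: sE.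
Qed.

Lemma card_mindeg2_seqs :
  #|[set E in Gnm n m | mindeg_ge2 E]| * m`! = #|mindeg2_seqs|.
Proof.
rewrite -[#|mindeg2_seqs|]sum1_card.
rewrite (partition_big edge_set (mem [set E in Gnm n m | mindeg_ge2 E])) /=; last first.
  move=> s; rewrite !inE => /and3P[/injectiveP inj_s /forallP s2 s_ge2].
  rewrite s_ge2 andbT card_imset // card_ord eqxx andbT.
  by apply/forallP => e; apply/implyP => /imsetP[i _ ->].
rewrite (eq_bigr (fun=> m`!)) ?sum_nat_const // => E; rewrite inE => /andP[EG E_ge2].
rewrite sum1dep_card (eq_card (B := [set s in ffun_on E | injectiveb s])); last first.
  by move=> s; rewrite [RHS]inE -mindeg2_seqs_fiber // [LHS]in_set.
rewrite card_inj_ffuns_on card_ord.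
by move: EG; rewrite inE => /andP[_ /eqP ->]; rewrite ffactnn.
Qed.

Lemma card_Gnm : #|Gnm n m| = 'C('C(n, 2), m).
Proof.
rewrite -[n in 'C(n, 2)]card_ord -card_draws -cards_draws.
apply: eq_card => E; rewrite !inE; congr (_ && _).
apply/forallP/subsetP => [E2 e eE|E2 e]; first by move: (E2 e); rewrite eE inE.
by apply/implyP => /E2; rewrite inE.
Qed.

Lemma card_Gnm_ge : (('C(n, 2) - m).*2) ^ m <= #|Gnm n m| * m`! * 2 ^ m.
Proof.
by rewrite card_Gnm bin_ffact -muln2 expnMn leq_mul2r ffact_ge_pow orbT.
Qed.

(* Half-edge [(i, c)] is sent to endpoint number [b i (+) c] of the edge [s i]. *)
Definition orient (s : {ffun 'I_m -> {set 'I_n}}) (b : {ffun 'I_m -> bool}) :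
    {ffun 'I_m * bool -> option 'I_n} :=
  [ffun p => onth (enum (s p.1)) (b p.1 (+) p.2)].

Lemma orient_inj :
  {in setX mindeg2_seqs [set: {ffun 'I_m -> bool}] &, injective (fun p => orient p.1 p.2)}.
Proof.
move=> [s b] [s' b']; rewrite !inE /= !andbT => /and3P[_ /forallP s2 _] /and3P[_ /forallP s2' _].
move=> /ffunP orient_eq.
have onth_eq i c : onth (enum (s i)) (b i (+) c) = onth (enum (s' i)) (b' i (+) c).
  by have := orient_eq (i, c); rewrite !ffunE.
have ss' : s = s'.
  apply/ffunP => i; apply/setP => v.
  rewrite (mem_card2_onth (b i) (eqP (s2 i))) (mem_card2_onth (b' i) (eqP (s2' i))).
  by apply: eq_existsb => c; rewrite onth_eq.
subst s'; congr (_, _); apply/ffunP => i.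
by apply: (onth_card2_inj (eqP (s2 i))); rewrite -[b i]addbF -[b' i]addbF onth_eq.
Qed.

Lemma orient_pfun2 s b : s \in mindeg2_seqs -> orient s b \in pfun2 n [set: 'I_m * bool].
Proof.
rewrite !inE => /and3P[_ /forallP s2 /forallP s_ge2]; apply/andP; split.
  apply/forallP => -[i c]; rewrite !ffunE inE /=.
  have [x [y [_ ->]]] := enum_card2 (eqP (s2 i)).
  by case: (b i (+) c).
apply/forallP => v; apply: leq_trans (s_ge2 v) _.
set fib := [set p | orient s b p == Some v].
apply: (@leq_trans #|[set i | v \in s i]|).
  apply: leq_trans (leq_imset_card s _); apply/subset_leq_card/subsetP => e.
  by rewrite !inE => /andP[/imsetP[i _ ->] vi]; apply: imset_f; rewrite inE.
apply: leq_trans (leq_imset_card fst fib); apply/subset_leq_card/subsetP => i.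
rewrite inE (mem_card2_onth (b i) (eqP (s2 i))) => /existsP[c /eqP onth_v].
by apply/imsetP; exists (i, c); rewrite // inE ffunE onth_v.
Qed.

Lemma card_mindeg2_seqs_le : #|mindeg2_seqs| * 2 ^ m <= #|pfun2 n [set: 'I_m * bool]|.
Proof.
have -> : 2 ^ m = #|[set: {ffun 'I_m -> bool}]| by rewrite cardsT card_ffun card_bool card_ord.
rewrite -cardsX -(card_in_imset orient_inj).
apply/subset_leq_card/subsetP => f /imsetP[[s b]]; rewrite inE /= => /andP[sS _] ->.
exact: orient_pfun2.
Qed.

End EdgeSequences.

(** * Real estimates *)

Open Scope R_scope.

Lemma exp_le_exp x y : x <= y -> exp x <= exp y.
Proof. by case=> [/exp_increasing/Rlt_le|->] //; apply: Rle_refl. Qed.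

Lemma exp_pow x n : exp x ^ n = exp (INR n * x).
Proof.
elim: n => [|n IH]; first by rewrite /= Rmult_0_l exp_0.
by rewrite [exp x ^ _]/= IH -exp_plus S_INR; congr exp; ring.
Qed.

Lemma ln_ge_of_exp_le x y : exp x <= y -> x <= ln y.
Proof.
move=> xy; rewrite -(ln_exp x); case: xy => [lt_xy|<-]; last exact: Rle_refl.
exact/Rlt_le/ln_increasing/lt_xy/exp_pos.
Qed.

Lemma Rdiv_le_of_le_mul a b c : 0 < b -> a <= c * b -> a / b <= c.
Proof.
move=> b_gt0 le_ab; apply: (Rmult_le_reg_r b) => //.
by rewrite /Rdiv Rmult_assoc Rinv_l ?Rmult_1_r //; lra.
Qed.

Lemma Rdiv_le_Rdiv a b c d : 0 < b -> 0 < d -> a * d <= c * b -> a / b <= c / d.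
Proof.
move=> b_gt0 d_gt0 le_ad; apply: (Rmult_le_reg_r (b * d)); first nra.
have -> : a / b * (b * d) = a * d by field; lra.
by have -> : c / d * (b * d) = c * b by field; lra.
Qed.

Lemma INR_muln a b : INR (a * b) = INR a * INR b.
Proof. exact: mult_INR. Qed.

Lemma INR_expn a k : INR (a ^ k) = INR a ^ k.
Proof. by rewrite !INRE RpowE GRing.natrX. Qed.

Lemma INR_double (k : nat) : INR k.*2 = 2 * INR k.
Proof. by rewrite -addnn plus_INR; ring. Qed.

Lemma INR_double_bin2 n : INR 'C(n, 2).*2 = INR n * (INR n - 1).
Proof.
case: n => [|k]; first by rewrite /=; ring.
by rewrite S_INR bin2 halfK oddM /= andNb subn0 mult_INR S_INR; ring.
Qed.

Lemma exp_partial_sum_le x K :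
  0 <= x -> sum_f_R0 (fun i => / INR (fact i) * x ^ i) K <= exp x.
Proof.
move=> x0; rewrite /exp; case: (exist_exp x) => l Hl /=.
apply: growing_ineq; last exact: Hl.
move=> k; rewrite tech5.
have : 0 <= / INR (fact k.+1) * x ^ k.+1.
  by apply: Rmult_le_pos; [exact/Rlt_le/Rinv_0_lt_compat/INR_fact_lt_0 | exact: pow_le].
lra.
Qed.

Lemma exp_tail2_le (N : nat) (x : R) : (0 < N)%N -> 0 <= x -> exp_tail2 N x <= exp x - 1 - x.
Proof.
move=> N_gt0 x_ge0.
have tail_eq : sum_f_R0 (fun i => / INR (fact i) * x ^ i) N = 1 + x + exp_tail2 N x.
  rewrite sum_f_R0E big_ltn // big_ltn // /exp_tail2 !RplusE /= Rinv_1 !Rmult_1_l Rmult_1_r.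
  rewrite GRing.addrA; congr (_ + _); apply: eq_bigr => j _.
  by rewrite INRE factE RpowE RinvE RmultE GRing.mulrC.
by have := exp_partial_sum_le N x_ge0; lra.
Qed.

Lemma exp1_mul_pow_le k : (0 < k)%N -> exp 1 * INR k ^ k.+1 <= (INR k + 1) ^ k.+1.
Proof.
move=> k0; have k_gt0 : 0 < INR k by apply/lt_0_INR/ltP.
set t := / (INR k + 1).
have k_t : INR k * exp t <= INR k + 1.
  have etK : exp t * exp (- t) = 1 by rewrite -exp_plus Rplus_opp_r exp_0.
  have kt : INR k = (INR k + 1) * (1 - t) by rewrite /t; field; lra.
  have := exp_ineq1_le (- t); have := exp_pos t; nra.
have := pow_incr _ _ k.+1 (conj (Rmult_le_pos _ _ (Rlt_le _ _ k_gt0) (Rlt_le _ _ (exp_pos t))) k_t).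
rewrite Rpow_mult_distr exp_pow S_INR.
have -> : (INR k + 1) * t = 1 by rewrite /t; field; lra.
by move=> ?; lra.
Qed.

Lemma fact_mul_exp_le k : (0 < k)%N -> INR (fact k) * exp (INR k) <= exp 1 * INR k ^ k.+1.
Proof.
elim: k => [//|[_ _|k IH _]]; first by rewrite /=; lra.
have k_ge1 : 1 <= INR k.+1 by apply: (le_INR 1); apply/leP.
rewrite fact_simpl mult_INR S_INR exp_plus -tech_pow_Rmult.
have := IH isT; have := @exp1_mul_pow_le k.+1 isT; have := exp_pos 1.
move: k_ge1; move: (INR (fact k.+1)) (INR k.+1) => F K K_ge1 e_gt0 step ind.
apply: Rle_trans (_ : (K + 1) * exp 1 * (exp 1 * K ^ k.+2) <= _).
  have -> : (K + 1) * F * (exp K * exp 1) = (K + 1) * exp 1 * (F * exp K) by ring.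
  by apply: Rmult_le_compat_l => //; nra.
have -> : exp 1 * ((K + 1) * (K + 1) ^ k.+2) = (K + 1) * exp 1 * (K + 1) ^ k.+2 by ring.
by apply: Rmult_le_compat_l => //; nra.
Qed.

Lemma pow_le_exp_tail h l n : 0 <= h -> h <= exp l - 1 - l ->
  h ^ n <= exp (INR n * (l - (1 + l) * exp (- l))).
Proof.
move=> h_ge0 h_le; rewrite -exp_pow; apply: pow_incr; split=> //.
have elK : exp l * exp (- l) = 1 by rewrite -exp_plus Rplus_opp_r exp_0.
have tail_eq : exp l - 1 - l = exp l * (1 - (1 + l) * exp (- l)).
  rewrite Rmult_minus_distr_l Rmult_1_r -Rmult_assoc (Rmult_comm (exp l) (1 + l)).
  by rewrite Rmult_assoc elK; ring.
rewrite /Rminus exp_plus.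
have := exp_ineq1_le (- ((1 + l) * exp (- l))); have := exp_pos l; nra.
Qed.

Lemma exp_neg_twice_le x : 0 <= x <= 1 / 2 -> exp (- (2 * x)) <= 1 - x.
Proof.
move=> x_bd; have eK : exp (- (2 * x)) * exp (2 * x) = 1.
  by rewrite -exp_plus Rplus_opp_l exp_0.
have := exp_ineq1_le (2 * x); have := exp_pos (- (2 * x)); nra.
Qed.

(* [e lam <= e^lam] and [lam (2 + lam) <= e^(2 lam)], so [exp (3 lam) <= n]
   makes [lam + lam (1 + lam) - n e^(-lam)] non-positive. *)
Lemma first_moment_exponent_le l n : 0 < l -> exp (3 * l) <= n ->
  exp 1 * (l * n) * exp (- ((n + l * n) * exp (- l))) <=
  n * exp (- (l * n * exp (- l))) * exp (- (l * (1 + l))).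
Proof.
move=> l_gt0 le_n.
have elK : exp l * exp (- l) = 1 by rewrite -exp_plus Rplus_opp_r exp_0.
have el_ge : 1 + l <= exp l := exp_ineq1_le l.
have el_pos := exp_pos l; have eml_pos := exp_pos (- l).
have e_l : exp 1 * l <= exp l.
  have -> : exp l = exp 1 * exp (l - 1) by rewrite -exp_plus; congr exp; ring.
  by have := exp_ineq1_le (l - 1); have := exp_pos 1; nra.
have sq : l * (2 + l) * exp l <= n.
  apply: Rle_trans le_n; have -> : 3 * l = l + l + l by ring.
  by rewrite !exp_plus; apply: Rmult_le_compat_r; [lra | nra].
have small : l + l * (1 + l) - n * exp (- l) <= 0.
  have : l * (2 + l) * exp l * exp (- l) <= n * exp (- l) by apply: Rmult_le_compat_r; lra.
  by rewrite Rmult_assoc elK; lra.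
have core : exp 1 * l * exp (l * (1 + l) - n * exp (- l)) <= 1.
  apply: Rle_trans (_ : exp l * exp (l * (1 + l) - n * exp (- l)) <= _).
    by apply: Rmult_le_compat_r => //; apply/Rlt_le/exp_pos.
  by rewrite -exp_plus -[X in _ <= X]exp_0; apply: exp_le_exp; lra.
have n_gt0 : 0 < n by nra.
have -> : exp (- ((n + l * n) * exp (- l))) = exp (- (l * n * exp (- l))) *
    exp (- (l * (1 + l))) * exp (l * (1 + l) - n * exp (- l)).
  by rewrite -!exp_plus; congr exp; ring.
have pos : 0 <= n * exp (- (l * n * exp (- l))) * exp (- (l * (1 + l))).
  by apply: Rmult_le_pos; [apply: Rmult_le_pos; [lra|] |]; exact/Rlt_le/exp_pos.
have := Rmult_le_compat_l _ _ _ pos core; rewrite Rmult_1_r.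
by apply: Rle_trans; right; ring.
Qed.

Lemma exp_mul_pow_le (n l : R) (m : nat) :
  0 < n -> 0 < l -> l * n = 2 * INR m -> (1 + l) / n <= 1 / 2 ->
  exp (- (l * (1 + l))) * (l * n) ^ (2 * m) <= l ^ (2 * m) * (n * (n - 1) - l * n) ^ m.
Proof.
move=> n_gt0 l_gt0 l_eq x_le.
have -> : - (l * (1 + l)) = INR m * - (2 * ((1 + l) / n)).
  apply: (Rmult_eq_reg_r n); last lra.
  have -> : INR m * - (2 * ((1 + l) / n)) * n = - (2 * INR m * (1 + l)) by field; lra.
  by rewrite -l_eq; ring.
rewrite -exp_pow Rpow_mult_distr !pow_sqr.
have -> : exp (- (2 * ((1 + l) / n))) ^ m * ((l * l) ^ m * (n * n) ^ m) =
          (l * l) ^ m * (exp (- (2 * ((1 + l) / n))) * (n * n)) ^ m.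
  by rewrite -!Rpow_mult_distr; congr (_ ^ _); ring.
apply: Rmult_le_compat_l; first by apply: pow_le; nra.
apply: pow_incr; split; first by apply: Rmult_le_pos; [exact/Rlt_le/exp_pos | nra].
have -> : n * (n - 1) - l * n = (1 - (1 + l) / n) * (n * n) by field; lra.
apply: Rmult_le_compat_r; first nra.
by apply: exp_neg_twice_le; split=> //; apply: Rle_mult_inv_pos; lra.
Qed.

Lemma first_moment_estimate (n m : nat) (l h : R) :
  (0 < m)%N -> 6 <= INR n -> l * INR n = 2 * INR m -> 3 * l <= ln (INR n) ->
  0 <= h -> h <= exp l - 1 - l ->
  INR (fact (2 * m)) * h ^ n / (l ^ (2 * m) * (INR n * (INR n - 1) - 2 * INR m) ^ m)
  <= INR n * exp (- (2 * INR m * exp (- l))).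
Proof.
move=> m_gt0 n_ge6 l_eq l_le h_ge0 h_le.
have m_ge1 : 1 <= INR m by apply: (le_INR 1); apply/leP.
have l_gt0 : 0 < l by nra.
have ln_le : ln (INR n) <= INR n - 1.
  by have := exp_ineq1_le (ln (INR n)); rewrite exp_ln; lra.
have fact_le : INR (fact (2 * m)) <= exp 1 * (l * INR n) ^ (2 * m).+1 * exp (- (l * INR n)).
  have := @fact_mul_exp_le (2 * m) ltac:(by rewrite muln_gt0).
  rewrite mult_INR (_ : INR 2 = 2) -?l_eq => [fact_le|]; last by rewrite /=; ring.
  apply: (Rmult_le_reg_r (exp (l * INR n))); first exact: exp_pos.
  by rewrite Rmult_assoc -exp_plus Rplus_opp_l exp_0 Rmult_1_r.
rewrite -l_eq; apply: Rdiv_le_of_le_mul.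
  by apply: Rmult_lt_0_compat; apply: pow_lt; nra.
apply: Rle_trans (_ : exp 1 * (l * INR n) ^ (2 * m).+1 * exp (- (l * INR n)) *
                      exp (INR n * (l - (1 + l) * exp (- l))) <= _).
  by apply: Rmult_le_compat => //; [exact: pos_INR | exact: pow_le | exact: pow_le_exp_tail].
have -> : exp 1 * (l * INR n) ^ (2 * m).+1 * exp (- (l * INR n)) *
          exp (INR n * (l - (1 + l) * exp (- l))) =
          exp 1 * (l * INR n) * exp (- ((INR n + l * INR n) * exp (- l))) * (l * INR n) ^ (2 * m).
  rewrite -tech_pow_Rmult Rmult_assoc -exp_plus.
  have -> : - (l * INR n) + INR n * (l - (1 + l) * exp (- l)) =
            - ((INR n + l * INR n) * exp (- l)) by ring.
  ring.
apply: Rle_trans (_ : INR n * exp (- (l * INR n * exp (- l))) * exp (- (l * (1 + l))) *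
                      (l * INR n) ^ (2 * m) <= _).
  apply: Rmult_le_compat_r; first by apply: pow_le; nra.
  by apply: first_moment_exponent_le => //; rewrite -(exp_ln (INR n)); [exact: exp_le_exp | lra].
rewrite Rmult_assoc; apply: Rmult_le_compat_l.
  by apply: Rmult_le_pos; [exact: pos_INR | exact/Rlt_le/exp_pos].
apply: exp_mul_pow_le => //; first lra.
by apply: Rdiv_le_of_le_mul; lra.
Qed.

(** * The first-moment bound *)

Lemma prob_mindeg_ge2_le_pfun2 n m : (m < 'C(n, 2))%N ->
  prob_mindeg_ge2 n m <=
  INR #|pfun2 n [set: 'I_m * bool]| / INR (('C(n, 2) - m).*2) ^ m.
Proof.
move=> m_lt; have := card_mindeg2_seqs_le n m; rewrite -card_mindeg2_seqs => seqs_le.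
have ac_le : INR #|[set E in Gnm n m | mindeg_ge2 E]| * INR (m`! * 2 ^ m) <=
             INR #|pfun2 n [set: 'I_m * bool]|.
  by rewrite -INR_muln mulnA; apply/le_INR/leP.
have q_le : INR (('C(n, 2) - m).*2) ^ m <= INR #|Gnm n m| * INR (m`! * 2 ^ m).
  by rewrite -INR_expn -INR_muln mulnA; apply/le_INR/leP/card_Gnm_ge.
have c_gt0 : 0 < INR (m`! * 2 ^ m) by apply/lt_0_INR/ltP; rewrite muln_gt0 fact_gt0 expn_gt0.
have q_gt0 : 0 < INR (('C(n, 2) - m).*2) ^ m.
  by apply/pow_lt/lt_0_INR/ltP; rewrite double_gt0 subn_gt0.
apply: Rdiv_le_Rdiv => //; first nra.
have A_ge0 := pos_INR #|[set E in Gnm n m | mindeg_ge2 E]|.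
have := Rmult_le_compat_l _ _ _ A_ge0 q_le.
have := Rmult_le_compat_r _ _ _ (pos_INR #|Gnm n m|) ac_le.
lra.
Qed.

Lemma prob_mindeg_ge2_le (n m : nat) (l : R) :
  2 * INR m < INR n * (INR n - 1) -> 0 < l ->
  prob_mindeg_ge2 n m <= INR (fact (2 * m)) * exp_tail2 (2 * m) l ^ n /
    (l ^ (2 * m) * (INR n * (INR n - 1) - 2 * INR m) ^ m).
Proof.
move=> m_lt l_gt0.
have m_le : (m.*2 < 'C(n, 2).*2)%N.
  by apply/ltP/INR_lt; rewrite INR_double INR_double_bin2.
have L_eq : INR (('C(n, 2) - m).*2) = INR n * (INR n - 1) - 2 * INR m.
  rewrite doubleB minus_INR; last exact/leP/ltnW.
  by rewrite INR_double_bin2 INR_double.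
have pfun2_le : INR #|pfun2 n [set: 'I_m * bool]| * l ^ (2 * m) <=
                INR (fact (2 * m)) * exp_tail2 (2 * m) l ^ n.
  have l_ge0 : (0 <= l)%R by apply/RleP/Rlt_le.
  have := @card_pfun2_le _ _ l l_ge0 n (2 * m) [set: 'I_m * bool].
  rewrite cardsT card_prod card_ord card_bool mulnC => /(_ (leqnn _))/RleP.
  by rewrite !INRE !RpowE factE.
rewrite ltn_double in m_le; apply: Rle_trans (prob_mindeg_ge2_le_pfun2 m_le) _.
rewrite L_eq; have q_gt0 : 0 < (INR n * (INR n - 1) - 2 * INR m) ^ m by apply: pow_lt; lra.
apply: Rdiv_le_Rdiv => //; first by apply: Rmult_lt_0_compat => //; apply: pow_lt.
have := Rmult_le_compat_r _ _ _ (Rlt_le _ _ q_gt0) pfun2_le; lra.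
Qed.

Lemma prob_mindeg_ge2_edgeless n : (0 < n)%N -> prob_mindeg_ge2 n 0 = 0.
Proof.
move=> n_gt0; rewrite /prob_mindeg_ge2.
suff -> : [set E in Gnm n 0 | mindeg_ge2 E] = set0 by rewrite cards0 /Rdiv Rmult_0_l.
apply/setP => E; rewrite !inE; apply/negbTE; case: eqP => [E0|]; last by rewrite andbF.
rewrite negb_and; apply/orP; right; apply/forallPn; exists (Ordinal n_gt0).
rewrite -ltnNge; apply: (@leq_ltn_trans #|E|); last by rewrite E0.
by apply/subset_leq_card/subsetP => e; rewrite inE => /andP[].
Qed.

Lemma eventually_density_small (C : R) : exists N : nat, forall n : nat, (N <= n)%N ->
  6 <= INR n /\ forall m : nat, INR m <= C * INR n * ln (ln (INR n)) ->
  3 * (2 * INR m / INR n) <= ln (INR n).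
Proof.
have [C' [CC' C'_ge1]] : exists C', C <= C' /\ 1 <= C'.
  by exists (Rmax C 1); split; [apply: Rmax_l | apply: Rmax_r].
(* With [t = ln (ln n) >= 24 C'], [ln n = e^t >= (1 + t/2)^2 >= 6 C' t]. *)
have [N N_gt] := INR_archimed 1 (Rmax 6 (exp (exp (24 * C')))) Rlt_0_1.
exists N => n Nn; have := le_INR _ _ (leP Nn); rewrite Rmult_1_r in N_gt.
have := Rmax_l 6 (exp (exp (24 * C'))); have := Rmax_r 6 (exp (exp (24 * C'))).
move=> big_n n_ge6 N_le; split; first lra.
have t_ge : 24 * C' <= ln (ln (INR n)).
  by apply/ln_ge_of_exp_le/ln_ge_of_exp_le; lra.
have y_eq : exp (ln (ln (INR n))) = ln (INR n).
  by apply: exp_ln; apply: Rlt_le_trans (exp_pos (24 * C')) _; apply: ln_ge_of_exp_le; lra.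
have y_ge : 6 * (C' * ln (ln (INR n))) <= ln (INR n).
  rewrite -[X in _ <= X]y_eq; move: (ln (ln (INR n))) t_ge => t t_ge.
  have -> : exp t = exp (t / 2) * exp (t / 2) by rewrite -exp_plus; congr exp; field.
  by have := exp_ineq1_le (t / 2); nra.
move=> m m_le; apply: Rle_trans y_ge.
have -> : 3 * (2 * INR m / INR n) = 6 * (INR m / INR n) by field; lra.
apply: Rmult_le_compat_l; first lra.
apply: Rdiv_le_of_le_mul; first lra.
have nt_ge0 : 0 <= INR n * ln (ln (INR n)) by apply: Rmult_le_pos; lra.
by have := Rmult_le_compat_r _ _ _ nt_ge0 CC'; lra.
Qed.

Theorem lemma6p1 (m : nat -> nat)
  (Hm : exists (C : R) (N0 : nat), forall n : nat, (N0 <= n)%nat ->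
          INR (m n) <= C * INR n * ln (ln (INR n))) :
  exists N : nat, forall n : nat, (N <= n)%nat ->
    prob_mindeg_ge2 n (m n) <=
      INR n * exp (- (2 * INR (m n) * exp (- (2 * INR (m n) / INR n)))).
Proof.
case: Hm => C [N0 m_le]; have [N1 dense] := eventually_density_small C.
exists (maxn N0 N1) => n; rewrite geq_max => /andP[N0n N1n].
have [n_ge6 /(_ _ (m_le n N0n)) l_le] := dense n N1n.
have n_gt0 : 0 < INR n by lra.
case: (posnP (m n)) => [-> | m_gt0].
  rewrite prob_mindeg_ge2_edgeless; last by apply/ltP/INR_lt; rewrite /=; lra.
  by apply: Rmult_le_pos; [exact: pos_INR | exact/Rlt_le/exp_pos].
have l_eq : 2 * INR (m n) / INR n * INR n = 2 * INR (m n) by field; lra.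
have l_gt0 : 0 < 2 * INR (m n) / INR n.
  by apply: Rdiv_lt_0_compat => //; have := lt_0_INR _ (ltP m_gt0); lra.
have tail_le := @exp_tail2_le (2 * m n) _ ltac:(by rewrite muln_gt0) (Rlt_le _ _ l_gt0).
apply: Rle_trans (prob_mindeg_ge2_le _ l_gt0)
  (first_moment_estimate m_gt0 n_ge6 l_eq l_le _ tail_le).
  by have := exp_ineq1_le (ln (INR n)); rewrite exp_ln // -l_eq; nra.
by apply/RleP/exp_tail2_ge0/RleP/Rlt_le.
Qed.
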